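(* For all $n\in\mathbb N$, \[\big((d_{T^{(n)}}(i),h_{T^{(n)}}(i)),\ i\in[n]\big)\stackrel{\mathcal L}{=}\big((d_{T_n}(\sigma(i)),h_{T_n}(\sigma(i))),\ i\in[n]\big),\] where $\sigma$ is a uniformly random permutation of $[n]$ independent of $T_n$. Consequently, jointly over all $i\in\mathbb Z$, $j\in\mathbb N$, the counts $|\{v\in[n]:d_{T_n}(v)=i,h_{T_n}(v)=j\}|$ and $|\{v\in[n]:d_{T^{(n)}}(v)=i,h_{T^{(n)}}(v)=j\}|$ have the same joint distribution.
   Context: Trees are rooted, edges directed towards the root; $d_t(v)$ is the number of children of $v$ in $t$ and $h_t(v)$ its distance to the root. $T_n$ is a random recursive tree: $T_1$ is a single root $1$, and $T_{m+1}$ is obtained from $T_m$ by attaching vertex $m+1$ to a uniformly random vertex of $[m]$, independently. Kingman's $n$-coalescent $(F_n,\dots,F_1)$ is the random sequence of forests on $[n]$ where $F_n$ has no edges and, for $2\le i\le n$, listing the trees of $F_i$ as $T^{(i)}_1,\dots,T^{(i)}_i$ in increasing order of smallest label, one chooses $\{a_i,b_i\}$ uniformly among 2-subsets of $[i]$ and an independent fair bit $\xi_i$ (independent over $i$), and obtains $F_{i-1}$ by adding an edge between the roots of $T^{(i)}_{a_i},T^{(i)}_{b_i}$ directed towards the root of $T^{(i)}_{\min(a_i,b_i)}$ if $\xi_i=1$ and towards the other root otherwise (the head becomes the root of the merged tree). $T^{(n)}$ is the unique tree of $F_1$, with its original labels in $[n]$. *)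

From HB Require Import structures.
From mathcomp Require Import all_boot all_order all_algebra all_fingroup.
From mathcomp Require Import ssrint rat.
Set Implicit Arguments. Unset Strict Implicit. Unset Printing Implicit Defensive.
Import GRing.Theory Num.Theory.

(* Conventions: the vertex/label set [n] = {1,...,n} is represented by 'I_n,
   label i+1 <-> ordinal i.  A rooted forest on 'I_n is a parent map
   par : 'I_n -> option 'I_n (None = root; edges point towards the root). *)

Section Forest.
Variable n : nat.
Implicit Types (par : 'I_n -> option 'I_n) (v : 'I_n).

Definition dchild par v : nat := #|[set u | par u == Some v]|.

Definition anc par (k : nat) v : option 'I_n := iter k (fun o => obind par o) (Some v).

(* height h(v) = distance to the root = number of k>=1 with a k-th ancestor *)
Definition depth par v : nat := \sum_(k < n) (anc par k.+1 v != None).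

Definition root_of par v : 'I_n :=
  iter n (fun x => if par x is Some y then y else x) v.

Definition profile par : {ffun 'I_n -> nat * nat} :=
  [ffun v => (dchild par v, depth par v)].

Definition count_dh par (i : int) (j : nat) : nat :=
  #|[set v | (Posz (dchild par v) == i) && (depth par v == j)]|.
End Forest.

Definition prob (T : finType) (A : {set T}) (E : pred T) : rat :=
  (#|[set x in A | E x]|%:R / #|A|%:R)%R.

(* outcome f: vertex m (label m+1), m >= 1, attaches to f m < m; f 0 = 0 dummy *)
Definition rrt_space n : {set {ffun 'I_n -> 'I_n}} :=
  [set f : {ffun 'I_n -> 'I_n} |
     [forall m : 'I_n, if val m == 0 then f m == m else (f m < m)%N]].

Definition rrt_par n (f : {ffun 'I_n -> 'I_n}) : 'I_n -> option 'I_n :=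
  fun v => if val v == 0 then None else Some (f v).

(* tree representatives = minimal labels of the trees, in increasing order *)
Definition reps n (par : 'I_n -> option 'I_n) : seq 'I_n :=
  [seq v : 'I_n <- enum 'I_n |
     [forall u : 'I_n, (u < v)%N ==> (root_of par u != root_of par v)]].

(* merge trees number a < b (0-indexed, sorted by smallest label);
   xi = true: head is the root of tree a (= tree min(a,b)) *)
Definition kmerge n (par : 'I_n -> option 'I_n) (a b : 'I_n) (xi : bool)
  : 'I_n -> option 'I_n :=
  let ra := root_of par (nth a (reps par) a) in
  let rb := root_of par (nth a (reps par) b) in
  if xi then fun v => if v == rb then Some ra else par v
        else fun v => if v == ra then Some rb else par v.

(* outcome w: entry k (1 <= k <= n-1) is the choice made when there are
   i = k+1 trees: a pair a < b <= k (i.e. a 2-subset of [i]) and the bit xi.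
   Entry 0 is an unused dummy fixed to (0,0,false). *)
Definition king_space n : {set {ffun 'I_n -> 'I_n * 'I_n * bool}} :=
  [set w : {ffun 'I_n -> 'I_n * 'I_n * bool} |
     [forall k : 'I_n,
        if val k == 0 then [&& (w k).1.1 == k, (w k).1.2 == k & ~~ (w k).2]
        else ((w k).1.1 < (w k).1.2)%N && ((w k).1.2 <= k)%N]].

(* final tree T^(n): steps i = n, n-1, ..., 2, i.e. k = n-1, ..., 1 *)
Definition kingman n (w : {ffun 'I_n -> 'I_n * 'I_n * bool}) : 'I_n -> option 'I_n :=
  foldl (fun par (k : 'I_n) =>
           if val k == 0 then par else kmerge par (w k).1.1 (w k).1.2 (w k).2)
        (fun _ => None) (rev (enum 'I_n)).

From HB Require Import structures.
From mathcomp Require Import all_boot all_order all_algebra all_fingroup.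
From mathcomp Require Import ssrint rat zify.
From Stdlib Require Import FunctionalExtensionality.
Set Implicit Arguments. Unset Strict Implicit. Unset Printing Implicit Defensive.
Import GRing.Theory Num.Theory.

(* Encode a recursive tree f and a permutation s as a run of Kingman's
   coalescent: for k = n-1, ..., 1 insert the edge s k -> s (f k) of the
   relabelled tree.  Before edge k is inserted, the forest consists of the
   edges out of s j for j > k, so its roots are exactly s 0, ..., s k: there
   are k+1 trees, and the insertion merges two distinct ones, the head being
   the root of the tree of s (f k).  This encoding is injective, and both
   sample spaces have (n-1)! n! elements, so it is a bijection; it sends (f, s)
   to the relabelling of T_n by s.  Degrees and heights are invariant under
   relabelling, which gives both identities in law. *)

Lemma card_ord_ltn n m : m <= n -> #|[pred a : 'I_n | a < m]| = m.
Proof. by move=> le_mn; rewrite -sum1_card (big_ord_narrow le_mn) sum1_card card_ord. Qed.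

Lemma sum_ord_double k : \sum_(b < k.+1) b * 2 = k.+1 * k.
Proof. by elim: k => [|k IHk]; rewrite ?big_ord1 // big_ord_recr /= IHk; lia. Qed.

Lemma card_ord_pairs n k : k < n ->
  #|[pred t : 'I_n * 'I_n * bool | (t.1.1 < t.1.2) && (t.1.2 <= k)]| = k.+1 * k.
Proof.
move=> lt_kn; rewrite -sum1_card big_mkcond /=.
rewrite -(pair_bigA _ (fun (p : 'I_n * 'I_n) (xi : bool) =>
  if (p.1 < p.2) && (p.2 <= k) then 1 else 0)) /=.
rewrite -(pair_bigA _ (fun a b : 'I_n =>
  \sum_(xi : bool) if (a < b) && (b <= k) then 1 else 0)) /=.
rewrite exchange_big /= -sum_ord_double -(big_ord_narrow (F := fun b : 'I_n => b * 2) lt_kn).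
rewrite [RHS]big_mkcond /=; apply: eq_bigr => b _; rewrite ltnS.
case: (leqP b k) => [le_bk|lt_kb]; last first.
  by rewrite big1 // => a _; rewrite big1 // => xi _; rewrite andbF.
rewrite -[b in b * 2](card_ord_ltn (ltnW (ltn_ord b))) -sum1_card big_distrl /=.
by rewrite [RHS]big_mkcond; apply: eq_bigr => a _; rewrite big_bool andbT inE; case: (a < b).
Qed.

Lemma card_ffun_forall (aT rT : finType) (P : aT -> pred rT) :
  #|[set g : {ffun aT -> rT} | [forall x, P x (g x)]]| = \prod_x #|P x|.
Proof.
rewrite (eq_card (B := family P)); last by move=> g; rewrite inE; apply/forallP/familyP.
by rewrite card_family foldrE big_map big_enum.
Qed.

Section UniformProbability.
Local Open Scope ring_scope.

Lemma eq_prob (T : finType) (A : {set T}) (E E' : pred T) :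
  {in A, E =1 E'} -> prob A E = prob A E'.
Proof.
move=> eqE; rewrite /prob; congr (_%:R / _); apply: eq_card => x; rewrite !inE.
by case: (boolP (x \in A)) => // /eqE ->.
Qed.

Lemma prob_in_imset (T U : finType) (g : T -> U) (A : {set T}) (E : pred U) :
  {in A &, injective g} -> prob (g @: A) E = prob A (fun x => E (g x)).
Proof.
move=> g_inj; rewrite /prob card_in_imset //; congr (_%:R / _).
rewrite -(card_in_imset (f := g) (D := [set x in A | E (g x)])); last first.
  by move=> x y /setIdP[xA _] /setIdP[yA _]; exact: g_inj.
apply/eq_card => y; rewrite inE; apply/andP/imsetP => [[/imsetP[x xA ->] Ex]|[x]].
  by exists x; rewrite // inE xA.
by rewrite inE => /andP[xA Ex] ->; split; rewrite ?imset_f.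
Qed.

Lemma prob_setXT (T U : finType) (A : {set T}) (E : pred T) : (0 < #|U|)%N ->
  prob (setX A [set: U]) (fun p => E p.1) = prob A E.
Proof.
move=> U_gt0; rewrite /prob (_ : [set p in _ | _] = setX [set x in A | E x] [set: U]).
  by rewrite !cardsX cardsT !natrM invfM mulrACA mulfV ?mulr1 // pnatr_eq0 -lt0n.
by apply/setP => -[x u]; rewrite !inE !andbT.
Qed.
End UniformProbability.

Section Relabel.
Variables (n : nat) (s : {perm 'I_n}) (par : 'I_n -> option 'I_n).

Definition relabel (v : 'I_n) : option 'I_n := omap s (par (s^-1 v)%g).

Lemma anc_relabel k v : anc relabel k v = omap s (anc par k (s^-1 v)%g).
Proof.
elim: k => [|k IHk]; first by rewrite /anc /= permKV.
rewrite -[anc _ k.+1 _]/(obind _ (anc _ k _)) IHk.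
rewrite -[anc par k.+1 _]/(obind par (anc par k _)).
by case: (anc par k _) => //= x; rewrite /relabel permK.
Qed.

Lemma depth_relabel v : depth relabel v = depth par (s^-1 v)%g.
Proof. by apply: eq_bigr => k _; rewrite anc_relabel; case: (anc par _ _). Qed.

Lemma dchild_relabel v : dchild relabel v = dchild par (s^-1 v)%g.
Proof.
rewrite /dchild -(card_preimset _ (@perm_inj _ s)); apply: eq_card => u.
rewrite !inE /relabel permK; case: (par u) => //= x.
by apply/eqP/eqP => [[<-]|[->]]; rewrite ?permK ?permKV.
Qed.

Lemma profile_relabel : profile relabel = [ffun v => profile par (s^-1 v)%g].
Proof. by apply/ffunP => v; rewrite !ffunE dchild_relabel depth_relabel. Qed.

Lemma count_dh_relabel i j : count_dh relabel i j = count_dh par i j.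
Proof.
rewrite /count_dh -(card_preimset _ (@perm_inj _ s)); apply: eq_card => u.
by rewrite !inE dchild_relabel depth_relabel permK.
Qed.
End Relabel.

Section TreesOfForest.
Variables (n : nat) (par : 'I_n -> option 'I_n).

Definition tree_index (v : 'I_n) : nat :=
  find (fun r => root_of par r == root_of par v) (reps par).

Lemma reps_uniq : uniq (reps par).
Proof. by rewrite filter_uniq ?enum_uniq. Qed.

Lemma root_of_inj_reps : {in reps par &, injective (root_of par)}.
Proof.
move=> u v; rewrite !mem_filter => /andP[/forallP min_u _] /andP[/forallP min_v _] Euv.
case: (ltngtP u v) => [lt_uv|lt_vu|/val_inj //].
- by move: (min_v u); rewrite lt_uv Euv eqxx.
- by move: (min_u v); rewrite lt_vu Euv eqxx.
Qed.

Lemma has_rep_root v : has (fun r => root_of par r == root_of par v) (reps par).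
Proof.
case: (arg_minnP (P := fun u => root_of par u == root_of par v) val (eqxx _)).
move=> m /eqP root_m min_m.
apply/hasP; exists m; last by rewrite root_m.
rewrite mem_filter mem_enum andbT; apply/forallP => u; apply/implyP => lt_um.
by apply: contraTneq lt_um => root_u; rewrite -leqNgt min_m // root_u root_m.
Qed.

Lemma tree_index_lt v : tree_index v < size (reps par).
Proof. by rewrite -has_find has_rep_root. Qed.

Lemma root_nth_tree_index x0 v :
  root_of par (nth x0 (reps par) (tree_index v)) = root_of par v.
Proof. exact/eqP/(nth_find x0 (has_rep_root v)). Qed.
End TreesOfForest.

Definition king_step n (w : {ffun 'I_n -> 'I_n * 'I_n * bool}) (k : 'I_n)
    (par : 'I_n -> option 'I_n) : 'I_n -> option 'I_n :=
  if val k == 0 then par else kmerge par (w k).1.1 (w k).1.2 (w k).2.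

Lemma kingmanE n (w : {ffun 'I_n -> 'I_n * 'I_n * bool}) :
  kingman w = foldr (king_step w) (fun _ => None) (enum 'I_n).
Proof. by rewrite /kingman foldl_rev. Qed.

Lemma rrt_space0 n (f : {ffun 'I_n -> 'I_n}) m :
  f \in rrt_space n -> val m = 0 -> f m = m.
Proof. by rewrite inE => /forallP/(_ m) + m0; rewrite m0 => /eqP. Qed.

Lemma rrt_space_lt n (f : {ffun 'I_n -> 'I_n}) m :
  f \in rrt_space n -> val m != 0 -> f m < m.
Proof. by rewrite inE => /forallP/(_ m) + /negbTE m0; rewrite m0. Qed.

Section KingmanCode.
Variables (n : nat) (f : {ffun 'I_n -> 'I_n}) (s : {perm 'I_n}).
Hypothesis f_rrt : f \in rrt_space n.

(* The coalescent forest just before step k: the relabelled recursive tree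
   restricted to the edges out of the vertices s j with j > k. *)
Definition rrt_trunc (k : nat) (v : 'I_n) : option 'I_n :=
  let j := (s^-1 v)%g in if k < j then Some (s (f j)) else None.

Lemma rrt_trunc_perm k x : rrt_trunc k (s x) = if k < x then Some (s (f x)) else None.
Proof. by rewrite /rrt_trunc permK. Qed.

Lemma rrt_trunc_None k v : (rrt_trunc k v == None) = ((s^-1 v)%g <= k).
Proof. by rewrite /rrt_trunc; case: ltnP. Qed.

Lemma root_of_rrt_trunc_id k v : (s^-1 v)%g <= k -> root_of (rrt_trunc k) v = v.
Proof. by rewrite -rrt_trunc_None => /eqP v_root; rewrite /root_of iter_fix // v_root. Qed.

(* Each step towards the root lowers the index under s until it is at most k. *)
Lemma root_of_rrt_trunc_le k v : (s^-1 (root_of (rrt_trunc k) v))%g <= k.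
Proof.
set up := fun x => if rrt_trunc k x is Some y then y else x.
suff bound m : let j := (s^-1 (iter m up v))%g in (j <= k) || (j + m <= s^-1 v)%g.
  by have := bound n; have := ltn_ord (s^-1 v)%g; rewrite /root_of -/up /=; lia.
elim: m => [|m]; first by rewrite /= addn0 leqnn orbT.
rewrite iterS; move: (iter m up v) => x; rewrite /up /rrt_trunc.
case: ltnP => [lt_kx|-> //] /=; rewrite permK.
have : f (s^-1 x)%g < (s^-1 x)%g.
  by apply: (rrt_space_lt f_rrt); rewrite -lt0n (leq_ltn_trans _ lt_kx).
lia.
Qed.

Lemma size_reps_rrt_trunc (k : 'I_n) : size (reps (rrt_trunc k)) <= k.+1.
Proof.
rewrite -(size_map (root_of (rrt_trunc k))) -(card_ord_ltn (ltn_ord k)) -(size_image s).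
apply: uniq_leq_size => [|_ /mapP[v _ ->]].
  by rewrite map_inj_in_uniq ?reps_uniq //; exact: root_of_inj_reps.
by rewrite -[X in X \in _](permKV s) mem_image ?inE ?ltnS ?root_of_rrt_trunc_le //; exact: perm_inj.
Qed.

Definition child_tree (k : 'I_n) : nat := tree_index (rrt_trunc k) (s k).
Definition parent_tree (k : 'I_n) : nat := tree_index (rrt_trunc k) (s (f k)).

(* Step k merges the tree of [s k] into the tree of [s (f k)], whose root
   becomes the root of the merged tree.  The [insubd] fallbacks never fire
   (see [king_codeE]). *)
Definition king_code : {ffun 'I_n -> 'I_n * 'I_n * bool} :=
  [ffun k : 'I_n => if val k == 0 then (k, k, false) else
     (insubd k (minn (child_tree k) (parent_tree k)),
      insubd k (maxn (child_tree k) (parent_tree k)),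
      parent_tree k < child_tree k)].

Lemma tree_index_rrt_trunc_le (k : 'I_n) v : tree_index (rrt_trunc k) v <= k.
Proof. by rewrite -ltnS (leq_trans (tree_index_lt _ _)) ?size_reps_rrt_trunc. Qed.

Lemma root_of_rrt_trunc_child (k : 'I_n) : root_of (rrt_trunc k) (s k) = s k.
Proof. by rewrite root_of_rrt_trunc_id ?permK. Qed.

Lemma root_of_rrt_trunc_parent (k : 'I_n) :
  val k != 0 -> root_of (rrt_trunc k) (s (f k)) = s (f k).
Proof. by move=> k0; rewrite root_of_rrt_trunc_id // permK ltnW ?(rrt_space_lt f_rrt). Qed.

Lemma child_parent_tree_neq (k : 'I_n) : val k != 0 -> child_tree k != parent_tree k.
Proof.
move=> k0; apply/eqP => same_tree; have := root_nth_tree_index (rrt_trunc k) k (s k).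
rewrite -/(child_tree k) same_tree root_nth_tree_index root_of_rrt_trunc_child.
rewrite root_of_rrt_trunc_parent // => /perm_inj fk.
by move: (rrt_space_lt f_rrt k0); rewrite fk ltnn.
Qed.

Lemma rrt_trunc_pred (k : 'I_n) : val k != 0 ->
  (fun v => if v == s k then Some (s (f k)) else rrt_trunc k v) = rrt_trunc k.-1.
Proof.
move=> k0; have k_pos : 0 < k by rewrite lt0n.
apply: functional_extensionality => v; rewrite /rrt_trunc.
case: eqP => [->|/eqP v_sk]; first by rewrite permK; case: ltnP => //; lia.
have : (s^-1 v)%g != k :> nat by rewrite (inj_eq (@ord_inj n)) (can2_eq (permKV s) (permK s)).
by move: (nat_of_ord _) => j ne_jk; rewrite (_ : (k < j) = (k.-1 < j)) //; lia.
Qed.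

Lemma king_codeE (k : 'I_n) : val k != 0 ->
  [/\ (king_code k).1.1 = minn (child_tree k) (parent_tree k) :> nat,
      (king_code k).1.2 = maxn (child_tree k) (parent_tree k) :> nat &
      (king_code k).2 = (parent_tree k < child_tree k)].
Proof.
move=> k0; rewrite ffunE (negbTE k0) /= !val_insubd.
have := tree_index_rrt_trunc_le k (s k); have := tree_index_rrt_trunc_le k (s (f k)).
have := ltn_ord k; rewrite -/(child_tree k) -/(parent_tree k) => lt_kn le_pk le_ck.
by rewrite !ifT //; lia.
Qed.

Lemma kmerge_king_code (k : 'I_n) : val k != 0 ->
  kmerge (rrt_trunc k) (king_code k).1.1 (king_code k).1.2 (king_code k).2 = rrt_trunc k.-1.
Proof.
move=> k0; case: (king_codeE k0) => a_min b_max ->.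
rewrite -rrt_trunc_pred // /kmerge a_min b_max.
case: ltngtP => [_|_|same_tree]; last by move: (child_parent_tree_neq k0); rewrite same_tree eqxx.
  all: by rewrite /child_tree /parent_tree !root_nth_tree_index
         root_of_rrt_trunc_child root_of_rrt_trunc_parent.
Qed.

Lemma king_code_in : king_code \in king_space n.
Proof.
rewrite inE; apply/forallP => k; case: eqP => [k0|/eqP k0].
  by rewrite ffunE k0 /= !eqxx.
have := child_parent_tree_neq k0; case: (king_codeE k0) => -> -> _.
have := tree_index_rrt_trunc_le k (s k); have := tree_index_rrt_trunc_le k (s (f k)).
rewrite -/(child_tree k) -/(parent_tree k); lia.
Qed.

Lemma foldr_king_code i : i <= n ->
  foldr (king_step king_code) (fun _ => None) (drop i (enum 'I_n)) = rrt_trunc i.-1.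
Proof.
move=> le_in; have [d def_n] : exists d, i + d = n by exists (n - i); rewrite subnKC.
elim: d i def_n {le_in} => [|d IHd] i def_n.
  rewrite addn0 in def_n; rewrite drop_oversize ?size_enum_ord ?def_n //=.
  apply: functional_extensionality => v; rewrite /rrt_trunc.
  by case: ltnP => // lt_nv; have := ltn_ord (s^-1 v)%g; lia.
have lt_in : i < n by lia.
rewrite (drop_nth (Ordinal lt_in)) ?size_enum_ord //= IHd; last by rewrite -def_n addSnnS.
rewrite -[nth _ _ _]/(nth _ _ (Ordinal lt_in)) nth_ord_enum /king_step /=.
by case: eqP => [->|/eqP i0] //; rewrite (kmerge_king_code (k := Ordinal lt_in)).
Qed.

Lemma rrt_trunc0 : rrt_trunc 0 = relabel s (rrt_par f).
Proof.
apply: functional_extensionality => v.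
by rewrite /rrt_trunc /relabel /rrt_par lt0n; case: eqP.
Qed.

Lemma kingman_king_code : kingman king_code = relabel s (rrt_par f).
Proof. by rewrite kingmanE -[enum _]drop0 foldr_king_code ?rrt_trunc0. Qed.

End KingmanCode.

Lemma king_code_inj n (f f' : {ffun 'I_n -> 'I_n}) (s s' : {perm 'I_n}) :
  f \in rrt_space n -> f' \in rrt_space n ->
  king_code f s = king_code f' s' -> f = f' /\ s = s'.
Proof.
move=> f_rrt f'_rrt same_code.
have same_trunc k : k < n -> rrt_trunc f s k = rrt_trunc f' s' k.
  by move=> lt_kn; rewrite -[k]/(k.+1.-1) -!foldr_king_code // same_code.
have same_s : s = s'.
  apply: invg_inj; apply/permP => v; apply: ord_inj; apply/eqP; rewrite eqn_leq.
  apply/andP; split.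
    by rewrite -(rrt_trunc_None f s) same_trunc // rrt_trunc_None.
  by rewrite -(rrt_trunc_None f' s') -same_trunc // rrt_trunc_None.
split=> //; subst s'; apply/ffunP => x; case: (eqVneq (val x) 0) => [x0|x0].
  by rewrite !rrt_space0.
have := same_trunc 0 (leq_ltn_trans (leq0n _) (ltn_ord x)).
move/(congr1 (fun par => par (s x))).
by rewrite !rrt_trunc_perm lt0n x0 => -[/perm_inj].
Qed.

Lemma card_rrt_space n : #|rrt_space n| = \prod_(k < n) (if val k == 0 then 1 else k).
Proof.
rewrite (card_ffun_forall (fun (k : 'I_n) y => if val k == 0 then y == k else y < k)).
apply: eq_bigr => k _; case: eqP => _; last exact/card_ord_ltn/ltnW.
by rewrite -(card1 k); apply: eq_card => y; rewrite !inE.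
Qed.

Lemma card_king_space n :
  #|king_space n| = \prod_(k < n) (if val k == 0 then 1 else k.+1 * k).
Proof.
rewrite (card_ffun_forall (fun (k : 'I_n) (t : 'I_n * 'I_n * bool) =>
  if val k == 0 then [&& t.1.1 == k, t.1.2 == k & ~~ t.2]
  else (t.1.1 < t.1.2) && (t.1.2 <= k))).
apply: eq_bigr => k _; case: eqP => _; last exact: card_ord_pairs.
rewrite -(card1 (k, k, false)); apply: eq_card => -[[a b] xi].
by rewrite !inE /= !xpair_eqE -andbA; case: xi.
Qed.

Lemma card_king_space_rrt n : #|king_space n| = #|rrt_space n| * n`!.
Proof.
rewrite card_king_space card_rrt_space fact_prod big_add1 big_mkord -big_split /=.
by apply: eq_bigr => -[[|k] lt_kn] //=; rewrite mulnC.
Qed.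

Definition king_code_pair n (p : {ffun 'I_n -> 'I_n} * {perm 'I_n}) :
  {ffun 'I_n -> 'I_n * 'I_n * bool} := king_code p.1 (p.2^-1)%g.

Lemma king_code_pair_inj n :
  {in setX (rrt_space n) [set: {perm 'I_n}] &, injective (@king_code_pair n)}.
Proof.
move=> [f t] [f' t'] /setXP[f_rrt _] /setXP[f'_rrt _].
by case/(king_code_inj f_rrt f'_rrt) => -> /invg_inj /= ->.
Qed.

Lemma imset_king_code_pair n :
  @king_code_pair n @: setX (rrt_space n) [set: {perm 'I_n}] = king_space n.
Proof.
apply/eqP; rewrite eqEcard card_in_imset; last exact: king_code_pair_inj.
rewrite cardsX cardsT card_Sn -card_king_space_rrt leqnn andbT.
by apply/subsetP => _ /imsetP[[f t] /setXP[f_rrt _] ->]; exact: king_code_in.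
Qed.

Theorem corollary2p3 (n : nat) :
  (forall x : {ffun 'I_n -> nat * nat},
     prob (king_space n) (fun w => profile (kingman w) == x) =
     prob (setX (rrt_space n) [set: {perm 'I_n}])
          (fun p => [ffun i => profile (rrt_par p.1) (p.2 i)] == x))
  /\
  (forall (s : seq (int * nat)) (c : seq nat),
     prob (rrt_space n) (fun f => [seq count_dh (rrt_par f) q.1 q.2 | q <- s] == c) =
     prob (king_space n) (fun w => [seq count_dh (kingman w) q.1 q.2 | q <- s] == c)).
Proof.
have perm_gt0 : 0 < #|{perm 'I_n}| by rewrite card_Sn fact_gt0.
have code_inj := @king_code_pair_inj n.
rewrite -imset_king_code_pair; split=> [x|s c]; rewrite prob_in_imset //.
- apply: eq_prob => -[f t] /setXP[f_rrt _] /=.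
  rewrite kingman_king_code // profile_relabel.
  by congr (_ == x); apply/ffunP => i; rewrite !ffunE invgK.
- rewrite -(prob_setXT _ _ perm_gt0); apply: eq_prob => -[f t] /setXP[f_rrt _] /=.
  rewrite kingman_king_code //.
  by congr (_ == c); apply: eq_map => q; rewrite count_dh_relabel.
Qed.
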